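(* For every positive integer $n$, $l_1(n)=a_1(n)=2^{n-1}$.
   Context: For a positive integer $m$, the triangle $T_m$ is an array whose row $x$ ($x=1,2,\dots$) has $x$ entries, in columns $0,\dots,x-1$. Row $1$ is the single entry $1$. For $x>1$, row $x$ is obtained from row $x-1$ by rotating it cyclically left by $m$ positions (the entry in column $c$ of row $x-1$ moves to column $(c-m)\bmod(x-1)\in\{0,\dots,x-2\}$ of row $x$), then appending in column $x-1$ a new entry equal to $1$ plus the entry in column $0$ of row $x-1$. $T_m(x,c)$ denotes the entry in row $x$, column $c$. Define $l_m(1)=1$ and, for $n\ge2$, $l_m(n)=\min\{x>l_m(n-1): T_m(x,0)=1\}$ (the rows headed by the value $1$); define $a_m(n)=\min\{x\in\mathbb{N}: T_m(x,x-1)=n\}$ (the row in which the value $n$ first appears). Here $m=1$. *)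

From mathcomp Require Import all_boot.
Set Implicit Arguments. Unset Strict Implicit. Unset Printing Implicit Defensive.

(* Row x of T_m (x >= 1) as a sequence of length x, columns 0..x-1.
   row_m 0 represents row 1 = [:: 1]; row_m (k+1) (row k+2) is obtained from
   row k+1 by rotating left by m positions (cyclically, i.e. by m mod (k+1))
   and appending 1 + (entry in column 0 of the previous row). *)
Fixpoint trow (m k : nat) : seq nat :=
  match k with
  | 0 => [:: 1]
  | k'.+1 => let r := trow m k' in
             rot (m %% size r) r ++ [:: (head 0 r).+1]
  end.

Definition T (m x c : nat) : nat := nth 0 (trow m x.-1) c.

Definition is_least (P : nat -> Prop) (x : nat) : Prop :=
  P x /\ forall y, P y -> x <= y.

(* l_rel m n x  <->  l_m(n) = x  (recursive definition of l_m). *)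
Inductive l_rel (m : nat) : nat -> nat -> Prop :=
| l_one : l_rel m 1 1
| l_succ n p x : 1 <= n -> l_rel m n p ->
    is_least (fun y => p < y /\ T m y 0 = 1) x -> l_rel m n.+1 x.

Definition a_is (m n x : nat) : Prop :=
  is_least (fun y => 1 <= y /\ T m y y.-1 = n) x.

(* Row 2^k + r of T_1 (0 <= r <= 2^k) is the tail, from column r on, of the
   sequence b_0, ..., b_(2^k - 1) followed by b_0, ..., b_(2r - 1), where
   b_j = 1 + (number of ones in the binary expansion of j): one rotation moves
   b_r = b_(2r) to the end and appends b_r + 1 = b_(2r+1).  Hence the rows
   headed by 1 are exactly the rows 2^k, and the last entry b_(2r-1) of row
   2^k + r is at most 1 + log2 (2r), so the value n cannot appear before row
   2^(n-1), where it is b_(2^(n-1) - 1) = n. *)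

From mathcomp Require Import all_boot.
From mathcomp Require Import zify.

(* The fuel j suffices because the argument is halved at each call. *)
Fixpoint popcount_rec (fuel j : nat) : nat :=
  if fuel is f.+1 then j %% 2 + popcount_rec f (j %/ 2) else 0.

Definition popcount (j : nat) : nat := popcount_rec j j.

Lemma popcount_rec0 f : popcount_rec f 0 = 0.
Proof. by elim: f => //= f ->. Qed.

Lemma popcount_rec_fuel f g j : j <= f -> j <= g -> popcount_rec f j = popcount_rec g j.
Proof.
elim: f g j => [|f IH] [|g] j hf hg //=; last by rewrite (IH g) //; lia.
all: by rewrite (_ : j = 0) ?div0n ?popcount_rec0 //; lia.
Qed.

Lemma popcount_half j : popcount j = j %% 2 + popcount (j %/ 2).
Proof.
by case: j => [|j] //; rewrite /popcount /= (@popcount_rec_fuel j (j.+1 %/ 2)); lia.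
Qed.

Lemma popcount_double r : popcount (2 * r) = popcount r.
Proof. by rewrite popcount_half (_ : (2 * r) %/ 2 = r); lia. Qed.

Lemma popcount_double1 r : popcount (2 * r).+1 = (popcount r).+1.
Proof. by rewrite popcount_half (_ : (2 * r).+1 %/ 2 = r); lia. Qed.

Lemma popcount_eq0 j : (popcount j == 0) = (j == 0).
Proof.
elim/ltn_ind: j => j IH; rewrite popcount_half.
case: (posnP j) => [-> //| j_gt0].
have /IH : j %/ 2 < j by lia.
by case: eqP => [_ /eqP|]; lia.
Qed.

Lemma exp2_popcount_le j : 2 ^ popcount j <= j.+1.
Proof.
elim/ltn_ind: j => j IH; rewrite popcount_half expnD.
case: (posnP j) => [-> //| j_gt0].
have /IH : j %/ 2 < j by lia.
by case: (ltnP (j %% 2) 1) => h2; [have -> : j %% 2 = 0 | have -> : j %% 2 = 1]; lia.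
Qed.

Lemma popcount_pred_exp2 k : popcount (2 ^ k).-1 = k.
Proof.
elim: k => [|k IH] //.
have -> : (2 ^ k.+1).-1 = (2 * (2 ^ k).-1).+1 by rewrite expnS; have := expn_gt0 2 k; lia.
by rewrite popcount_double1 IH.
Qed.

Definition popseq (n : nat) : seq nat := [seq (popcount j).+1 | j <- iota 0 n].

Lemma size_popseq n : size (popseq n) = n.
Proof. by rewrite size_map size_iota. Qed.

Lemma nth_popseq n j : j < n -> nth 0 (popseq n) j = (popcount j).+1.
Proof. by move=> hj; rewrite (nth_map 0) ?size_iota // nth_iota. Qed.

Lemma popseqS n : popseq n.+1 = rcons (popseq n) (popcount n).+1.
Proof. by rewrite /popseq -addn1 iotaD map_cat cats1. Qed.

Lemma size_trow m k : size (trow m k) = k.+1.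
Proof. by elim: k => [|k IH] //=; rewrite size_cat size_rot IH addn1. Qed.

Lemma trow1S x : trow 1 x.+1 = rot 1 (trow 1 x) ++ [:: (head 0 (trow 1 x)).+1].
Proof. by case: x => [|x] //=; rewrite size_cat size_rot size_trow addn1 modn_small. Qed.

Lemma rot1_drop_popseq s r : r < size s -> nth 0 s r = (popcount r).+1 ->
  rot 1 (drop r s ++ popseq (2 * r)) ++ [:: (head 0 (drop r s ++ popseq (2 * r))).+1]
  = drop r.+1 s ++ popseq (2 * r.+1).
Proof.
move=> hr sr; rewrite (drop_nth 0) // sr /= rot1_cons -cats1 -!catA; congr (_ ++ _).
have -> : 2 * r.+1 = (2 * r).+2 by lia.
by rewrite !popseqS -!cats1 -catA popcount_double popcount_double1.
Qed.

Lemma trow1_block k : trow 1 (2 ^ k).-1 = popseq (2 ^ k) ->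
  forall r, r <= 2 ^ k -> trow 1 (2 ^ k + r).-1 = drop r (popseq (2 ^ k)) ++ popseq (2 * r).
Proof.
move=> row0; elim=> [|r IH] hr; first by rewrite addn0 drop0 cats0.
have -> : (2 ^ k + r.+1).-1 = (2 ^ k + r).-1.+1 by have := expn_gt0 2 k; lia.
rewrite trow1S IH 1?ltnW //.
by apply: rot1_drop_popseq; rewrite ?size_popseq ?nth_popseq.
Qed.

Lemma trow1_pow k : trow 1 (2 ^ k).-1 = popseq (2 ^ k).
Proof.
elim: k => [|k IH] //.
have := @trow1_block k IH _ (leqnn _).
by rewrite drop_oversize ?size_popseq // addnn -mul2n -expnS.
Qed.

Lemma trow1_pow_add k r : r <= 2 ^ k ->
  trow 1 (2 ^ k + r).-1 = drop r (popseq (2 ^ k)) ++ popseq (2 * r).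
Proof. exact: @trow1_block k (trow1_pow k) r. Qed.

Lemma exp2_add_decomp y : 0 < y -> exists k r, r < 2 ^ k /\ y = 2 ^ k + r.
Proof.
move=> y_gt0; exists (trunc_log 2 y), (y - 2 ^ trunc_log 2 y).
have := trunc_logP (isT : 1 < 2) y_gt0; have := trunc_log_ltn y (isT : 1 < 2).
by rewrite expnS; lia.
Qed.

Lemma T1_head k r : r < 2 ^ k -> T 1 (2 ^ k + r) 0 = (popcount r).+1.
Proof.
move=> hr; rewrite /T trow1_pow_add 1?ltnW // nth_cat size_drop size_popseq.
by rewrite subn_gt0 hr nth_drop addn0 nth_popseq.
Qed.

Lemma T1_last k r : r <= 2 ^ k -> 0 < r ->
  T 1 (2 ^ k + r) (2 ^ k + r).-1 = (popcount (2 * r).-1).+1.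
Proof.
move=> hr r_gt0; rewrite /T trow1_pow_add // nth_cat size_drop size_popseq.
have -> : ((2 ^ k + r).-1 < 2 ^ k - r) = false by lia.
by rewrite nth_popseq; [congr (popcount _).+1 | ]; lia.
Qed.

Lemma T1_pow_head k : T 1 (2 ^ k) 0 = 1.
Proof. by rewrite /T trow1_pow nth_popseq ?expn_gt0. Qed.

Lemma T1_pow_last k : T 1 (2 ^ k) (2 ^ k).-1 = k.+1.
Proof.
by rewrite /T trow1_pow nth_popseq ?popcount_pred_exp2 //; have := expn_gt0 2 k; lia.
Qed.

Lemma T1_head_eq1 y : 0 < y -> T 1 y 0 = 1 -> exists k, y = 2 ^ k.
Proof.
move=> /exp2_add_decomp [k [r [hr ->]]]; rewrite T1_head // => /eqP.
by rewrite eqSS popcount_eq0 => /eqP ->; exists k; rewrite addn0.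
Qed.

Lemma exp2_T1_last_le y : 0 < y -> 2 ^ (T 1 y y.-1).-1 <= y.
Proof.
move=> y_gt0; case: (ltnP y 2) => y2; first by rewrite (_ : y = 1) //; lia.
have [k [r [hr ey]]] := @exp2_add_decomp y.-1 ltac:(lia).
have -> : y = 2 ^ k + r.+1 by lia.
by rewrite T1_last //; apply: leq_trans (exp2_popcount_le _) _; lia.
Qed.

Lemma T1_least_pow_head_above n :
  is_least (fun y => 2 ^ n < y /\ T 1 y 0 = 1) (2 ^ n.+1).
Proof.
split; first by rewrite ltn_exp2l // T1_pow_head.
move=> y [hy /(@T1_head_eq1 y (leq_ltn_trans (leq0n _) hy)) [k ey]].
by move: hy; rewrite ey ltn_exp2l // leq_exp2l.
Qed.

Lemma l_rel1_pow n : 1 <= n -> l_rel 1 n (2 ^ n.-1).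
Proof.
elim: n => [|n IH] // _; case: (posnP n) => [->|n_gt0]; first exact: l_one.
apply: l_succ (IH n_gt0) _ => //.
by have := T1_least_pow_head_above n.-1; rewrite prednK.
Qed.

Lemma a_is1_pow n : 1 <= n -> a_is 1 n (2 ^ n.-1).
Proof.
move=> n_gt0; split; first by rewrite expn_gt0 T1_pow_last prednK.
move=> y [y_gt0 <-]; exact: exp2_T1_last_le.
Qed.

Theorem mainTheorem15 (n : nat) : 1 <= n ->
  l_rel 1 n (2 ^ n.-1) /\ a_is 1 n (2 ^ n.-1).
Proof. by move=> n_gt0; split; [apply: l_rel1_pow | apply: a_is1_pow]. Qed.
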